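(* Let $w$ be a string of length $n$ with minimal period $p>1$, and let $k=\max\{l\ge 0 : w[1..l]=w[j..j+l-1]\text{ for some } j \text{ with } 1<j\le p\}$. Then the leftmost critical point of $w$ is the leftmost position $i>k+1$ of $w$ such that $i-\mu(i)<1$ or $i+\mu(i)-1>n$.
   Context: $w[i..j]=w[i]\cdots w[j]$ (empty if $i>j$), and substrings $w[j..j+l-1]$ are required to lie within $w$. A period of $w$ is an integer $p$ with $0<p\le n$ and $w[j]=w[j+p]$ for all $1\le j\le n-p$. For a position $i\in\{1,\dots,n\}$, the local period $\mu(i)$ is the least positive integer $\mu$ such that $w[j]=w[j+\mu]$ for all $j$ with $\max\{1,i-\mu\}\le j$ and $j+\mu\le\min\{n,i+\mu-1\}$. A position $i$ is a critical point of $w$ if $\mu(i)$ equals the minimal period of $w$. *)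

From mathcomp Require Import all_boot.
Set Implicit Arguments. Unset Strict Implicit. Unset Printing Implicit Defensive.

(* Strings are sequences over an eqType alphabet; positions are 1-indexed:
   the letter w[j] (1 <= j <= size w) is  onth w j.-1  (= Some _ in range). *)
Definition letter (T : eqType) (w : seq T) (j : nat) : option T := onth w j.-1.

Definition is_period (T : eqType) (w : seq T) (p : nat) : Prop :=
  0 < p <= size w /\
  forall j, 1 <= j -> j + p <= size w -> letter w j = letter w (j + p).

Definition is_min_period (T : eqType) (w : seq T) (p : nat) : Prop :=
  is_period w p /\ forall q, is_period w q -> p <= q.

Definition local_rep (T : eqType) (w : seq T) (i mu : nat) : bool :=
  [forall j : 'I_(size w).+1,
     ((maxn 1 (i - mu) <= j) && (j + mu <= minn (size w) (i + mu - 1)))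
       ==> (letter w j == letter w (j + mu))].

Lemma local_rep_exists (T : eqType) (w : seq T) (i : nat) :
  exists mu, (0 < mu) && local_rep w i mu.
Proof.
exists (size w).+1; apply/andP; split => //.
apply/forallP => j; apply/implyP => /andP [_ H].
have : j + (size w).+1 <= size w by apply: (leq_trans H); exact: geq_minl.
by rewrite addnS ltnNge leq_addl.
Qed.

Definition local_period (T : eqType) (w : seq T) (i : nat) : nat :=
  ex_minn (local_rep_exists w i).

Definition is_critical (T : eqType) (w : seq T) (p i : nat) : Prop :=
  1 <= i <= size w /\ local_period w i = p.

Definition prefix_occurs_at (T : eqType) (w : seq T) (j l : nat) : Prop :=
  j + l - 1 <= size w /\ take l w = take l (drop j.-1 w).

Definition leftmost (P : nat -> Prop) (i : nat) : Prop :=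
  P i /\ forall j, P j -> i <= j.

Definition is_max (P : nat -> Prop) (k : nat) : Prop :=
  P k /\ forall l, P l -> l <= k.

From mathcomp Require Import all_boot all_order zify.
Set Implicit Arguments. Unset Strict Implicit. Unset Printing Implicit Defensive.
Import Order.Theory.

(* Order the alphabet.  If [q] and [q'] start the lexicographically maximal
   suffixes of [w] for the order and for its dual, with [q' <= q], then no
   shift shorter than the minimal period [p] is a local repetition at the cut
   before [q], and [q < p] (Crochemore-Perrin); so [w] has a critical point
   [c <= p], i.e. one whose local period reaches past the left end of [w].
   The prefix of length [k] recurring at some [j <= p] gives every position
   [i <= k+1] a local repetition [j - 1 < p].  A position [i > k+1] whose local
   period [m < p] reaches past the left end would make [m] a period, or make
   the prefix of length [i - 1 > k] recur at [m + 1]; and a local period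
   reaching past the right end at [i] remains a local repetition at every
   later position, so it cannot occur before the leftmost critical point. *)

Section Onth.
Variable T : Type.
Implicit Types s : seq T.

Lemma onth_drop s a y : onth (drop a s) y = onth s (a + y).
Proof. by rewrite !onthE map_drop nth_drop. Qed.

Lemma onth_take s m y : onth (take m s) y = if y < m then onth s y else None.
Proof.
rewrite !onthE map_take; case: ltnP => [ym | my]; first by rewrite nth_take.
by rewrite nth_default // size_take size_map; case: ltnP => //; lia.
Qed.

Lemma eq_take_drop s a b m :
  take m (drop a s) = take m (drop b s) <->
  forall y, y < m -> onth s (a + y) = onth s (b + y).
Proof.
split=> [e y ym | e].
  by have := congr1 (fun t => onth t y) e; rewrite /= !onth_take ym !onth_drop.
by apply: eq_from_onth => y; rewrite !onth_take !onth_drop; case: ltnP => // /e.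
Qed.

Lemma drop_take_cat s a b : a <= b -> drop a s = take (b - a) (drop a s) ++ drop b s.
Proof. by move=> ab; rewrite -{1}(cat_take_drop (b - a) (drop a s)) drop_drop subnK. Qed.

End Onth.

Section Periodicity.
Variable T : Type.
Implicit Types s : seq T.

Definition periodic s r := forall x, x + r < size s -> onth s x = onth s (x + r).

(* Positions are 0-indexed here: [rep_at s q r] is the local repetition
   condition for shift [r] at the cut between positions [q - 1] and [q]. *)
Definition rep_at s q r :=
  forall x, q - r <= x -> x < q -> x + r < size s -> onth s x = onth s (x + r).

Lemma periodic_rep_at s q r : periodic s r -> rep_at s q r.
Proof. by move=> per x _ _; apply: per. Qed.

Lemma rep_at_periodic s q r : q <= r -> size s <= q + r -> rep_at s q r -> periodic s r.
Proof. by move=> qr sqr rep x xr; apply: rep; lia. Qed.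

Lemma rep_atW s q q' r : q <= q' -> size s <= q + r -> rep_at s q r -> rep_at s q' r.
Proof. by move=> qq' sqr rep x x1 x2 x3; apply: rep; lia. Qed.

End Periodicity.

Lemma prefix_dropP (T : eqType) (s : seq T) a b :
  reflect (forall y, b + y < size s -> onth s (a + y) = onth s (b + y))
          (prefix (drop b s) (drop a s)).
Proof.
rewrite prefixE size_drop -[X in _ == X](@take_oversize _ (size s - b)) ?size_drop //.
apply: (iffP eqP) => [/eq_take_drop e y ys | e]; last apply/eq_take_drop => y ys;
  [apply: e | apply: e]; lia.
Qed.

Section Relabel.
Variables (T U : eqType) (f : T -> U) (s : seq T).
Hypothesis f_inj : {in s &, injective f}.

Lemma onth_map_eq x y : (onth (map f s) x == onth (map f s) y) = (onth s x == onth s y).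
Proof.
rewrite !onth_map; case sx: (onth s x) => [a|]; case sy: (onth s y) => [b|] //=.
have [aS bS] : a \in s /\ b \in s by split; apply/onthP; [exists x | exists y].
by apply/eqP/eqP => [[/f_inj ->] | [->]].
Qed.

Lemma periodic_map r : periodic (map f s) r <-> periodic s r.
Proof.
by split=> per x; rewrite ?size_map => xr; apply/eqP;
  [rewrite -onth_map_eq | rewrite onth_map_eq]; apply/eqP/per; rewrite ?size_map.
Qed.

Lemma rep_at_map q r : rep_at (map f s) q r <-> rep_at s q r.
Proof.
by split=> rep x x1 x2; rewrite ?size_map => x3; apply/eqP;
  [rewrite -onth_map_eq | rewrite onth_map_eq]; apply/eqP/rep; rewrite ?size_map.
Qed.

End Relabel.

Section Lexi.
Context {d : Order.disp_t} (T : orderType d).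
Implicit Types u v t : seq T.

Lemma lexi_catl u v t : (u ++ v <= u ++ t :> seqlexi T)%O = (v <= t :> seqlexi T)%O.
Proof. by elim: u => //= x u IH; rewrite eqhead_lexiE. Qed.

Lemma prefix_lexi u v : prefix u v -> (u <= v :> seqlexi T)%O.
Proof. by case/prefixP => t ->; rewrite -{1}[u]cats0 lexi_catl lexi0s. Qed.

Lemma lexi_dual_prefix u v :
  (u <= v :> seqlexi T)%O -> (u <= v :> seqlexi T^d)%O -> prefix u v.
Proof.
elim: u v => [|x u IH] [|y v] //=; rewrite !lexi_cons /=.
case/andP=> xy /implyP uv /andP[yx /implyP vu].
have -> : x = y by apply/le_anti; rewrite xy.
by rewrite eqxx /=; apply: IH; [apply: uv | apply: vu].
Qed.

Lemma exists_max_suffix (s : seq T) :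
  0 < size s -> exists2 q, q < size s & forall x, (drop x s <= drop q s :> seqlexi T)%O.
Proof.
case: s => // a s _.
set F := fun i : 'I_(size s).+1 => (drop i (a :: s) : seqlexi T).
case: (@arg_maxP _ _ _ ord0 xpredT F isT) => /= q _ q_max.
exists q => // x; have [xs | sx] := ltnP x (size s).+1.
  exact: (q_max (Ordinal xs)).
by rewrite drop_oversize ?lexi0s.
Qed.

End Lexi.

Section MaxSuffix.
Context {d : Order.disp_t} (T : orderType d) (s : seq T) (q : nat).
Hypothesis q_lt : q < size s.
Hypothesis q_max : forall x, (drop x s <= drop q s :> seqlexi T)%O.

Lemma max_suffix_not_prefix a : a < q -> ~ prefix (drop q s) (drop a s).
Proof.
move=> aq /prefix_lexi le_qa; have /(congr1 size) : drop a s = drop q s.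
  by apply: (@le_anti _ (seqlexi T)); rewrite q_max le_qa.
by rewrite !size_drop; lia.
Qed.

Lemma max_suffix_lt_period p : 0 < p -> periodic s p -> q < p.
Proof.
move=> p0 per; rewrite ltnNge; apply/negP => pq.
apply: (@max_suffix_not_prefix (q - p)); first lia.
apply/prefix_dropP => y /= qy; rewrite per; last lia.
by congr (onth _ _); lia.
Qed.

Lemma max_suffix_no_rep_after r : 0 < r -> r <= q -> ~ rep_at s q r.
Proof.
move=> r0 rq rep.
have rep_r y : y < r -> q + y < size s -> onth s (q - r + y) = onth s (q + y).
  by move=> yr qy; rewrite rep; try lia; congr (onth _ _); lia.
have [short | long] := leqP (size s - q) r.
  apply: (@max_suffix_not_prefix (q - r)); first lia.
  by apply/prefix_dropP => y /= qy; apply: rep_r; lia.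
set u := take r (drop q s).
have e1 : drop (q - r) s = u ++ drop q s.
  rewrite (@drop_take_cat _ s (q - r) q) ?leq_subr // subKn //; congr (_ ++ _).
  by apply/eq_take_drop => y yr; apply: rep_r; lia.
have e2 : drop q s = u ++ drop (q + r) s.
  by rewrite (@drop_take_cat _ s q (q + r)) ?leq_addr // addKn.
have := q_max (q - r); rewrite e1 {2}e2 lexi_catl => le_q_qr.
have /(congr1 size) : drop q s = drop (q + r) s.
  by apply: (@le_anti _ (seqlexi T)); rewrite q_max le_q_qr.
by rewrite !size_drop; lia.
Qed.

Lemma max_suffix_rep_before q' r :
  (forall x, (drop x s <= drop q' s :> seqlexi T^d)%O) ->
  q' <= q < r -> rep_at s q r -> periodic s r.
Proof.
move=> q'_max /andP[q'q qr] rep.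
have [long | short] := leqP (size s) (q + r).
  exact: rep_at_periodic (ltnW qr) long rep.
set t := take (q - q') (drop q' s).
have e1 : drop q' s = t ++ drop q s by apply: drop_take_cat.
have e2 : drop (q' + r) s = t ++ drop (q + r) s.
  rewrite (@drop_take_cat _ s (q' + r) (q + r)) ?leq_add2r // subnDr; congr (_ ++ _).
  by apply/eq_take_drop => y yq; rewrite [RHS]rep; try lia; congr (onth _ _); lia.
have := q'_max (q' + r); rewrite e2 e1 lexi_catl => le_dual.
move/prefix_dropP: (lexi_dual_prefix (q_max (q + r)) le_dual) => pre x xr.
have [xq | qx] := ltnP x q; first by apply: rep; lia.
by rewrite -(subnKC qx) addnAC; apply: pre => /=; lia.
Qed.

Lemma max_suffix_critical p q' :
  0 < p -> periodic s p -> (forall r, 0 < r < p -> ~ periodic s r) ->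
  (forall x, (drop x s <= drop q' s :> seqlexi T^d)%O) -> q' <= q ->
  q < p /\ forall r, 0 < r < p -> ~ rep_at s q r.
Proof.
move=> p0 per_p p_min q'_max q'q; have qp := max_suffix_lt_period p0 per_p.
split=> // r /andP[r0 rp] rep; have [rq | qr] := leqP r q.
  exact: max_suffix_no_rep_after rep.
by apply: (p_min r); rewrite ?r0 //; apply: max_suffix_rep_before q'_max _ rep; rewrite q'q.
Qed.

End MaxSuffix.

Theorem critical_factorization {d : Order.disp_t} (T : orderType d) (s : seq T) p :
  0 < p <= size s -> periodic s p -> (forall r, 0 < r < p -> ~ periodic s r) ->
  exists2 q, q < p & forall r, 0 < r < p -> ~ rep_at s q r.
Proof.
move=> /andP[p0 ps] per_p p_min; have s0 : 0 < size s by lia.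
have [q1 q1s max1] := exists_max_suffix s0.
have [q2 q2s max2] := exists_max_suffix (T := T^d) s0.
have [q21 | q12] := leqP q2 q1.
  by have [] := max_suffix_critical q1s max1 p0 per_p p_min max2 q21; exists q1.
by have [] := max_suffix_critical q2s max2 p0 per_p p_min max1 (ltnW q12); exists q2.
Qed.

(* An arbitrary alphabet is ordered by relabelling each letter with the index
   of its first occurrence. *)
Corollary critical_factorization_eq (T : eqType) (s : seq T) p :
  0 < p <= size s -> periodic s p -> (forall r, 0 < r < p -> ~ periodic s r) ->
  exists2 q, q < p & forall r, 0 < r < p -> ~ rep_at s q r.
Proof.
move=> ps per_p p_min.
have [x0 _] : exists x0 : T, True.
  by clear per_p p_min; case: s ps => [|x0 ?] /= ps; [lia | exists x0].
have idx_inj : {in s &, injective (index^~ s)} := @index_inj _ x0 s.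
have [|||q qp no_rep] := @critical_factorization _ nat [seq index x s | x <- s] p.
- by rewrite size_map.
- exact/(periodic_map idx_inj).
- by move=> r rp /(periodic_map idx_inj); apply: p_min.
by exists q => // r rp /(rep_at_map idx_inj); apply: no_rep.
Qed.

Section Positions.
Variables (T : eqType) (w : seq T).

Lemma is_periodE r : is_period w r <-> 0 < r <= size w /\ periodic w r.
Proof.
rewrite /is_period /letter; split=> -[rw per]; split=> //.
  by move=> x xr; have := per x.+1; rewrite addSn; apply; lia.
by move=> [|j] // _ jr; rewrite addSn; apply: per; lia.
Qed.

Lemma local_repE i r : local_rep w i r <-> rep_at w i.-1 r.
Proof.
split=> [/forallP rep x x1 x2 x3 | rep].
  have xw : x.+1 < (size w).+1 by lia.
  move/implyP: (rep (Ordinal xw)); rewrite /letter addSn /= => /(_ _)/eqP; apply.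
  by apply/andP; split; lia.
apply/forallP => -[[|j] jw]; apply/implyP => /andP[/= j1 j2]; first lia.
by apply/eqP; rewrite /letter addSn; apply: rep; lia.
Qed.

Lemma local_period_rep i : (0 < local_period w i) && local_rep w i (local_period w i).
Proof. by rewrite /local_period; case: ex_minnP. Qed.

Lemma local_period_min i m : 0 < m -> local_rep w i m -> local_period w i <= m.
Proof. by move=> m0 rep; rewrite /local_period; case: ex_minnP => n _; apply; rewrite m0. Qed.

Lemma local_period_le_period i p : is_period w p -> local_period w i <= p.
Proof.
case/is_periodE => /andP[p0 _] per; apply: local_period_min => //.
exact/local_repE/periodic_rep_at.
Qed.

Lemma prefix_occurs_atE m l :
  prefix_occurs_at w m.+1 l <->
  l + m <= size w /\ forall x, x < l -> onth w x = onth w (x + m).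
Proof.
rewrite /prefix_occurs_at -{2}[w]drop0 eq_take_drop.
by split=> -[lw e]; split=> [|x /e]; rewrite ?add0n 1?addnC //; lia.
Qed.

Lemma local_period_le_occurrence j l i :
  1 < j -> prefix_occurs_at w j l -> i <= l.+1 -> local_period w i <= j.-1.
Proof.
move=> j1; rewrite -(prednK (ltnW j1)) => /prefix_occurs_atE[_ e] il.
by apply: local_period_min; [lia | apply/local_repE => x _ xi _; apply: e; lia].
Qed.

Lemma local_period_left_boundary i :
  0 < i -> i <= local_period w i -> local_period w i <= size w ->
  is_period w (local_period w i) \/ prefix_occurs_at w (local_period w i).+1 i.-1.
Proof.
move=> i0 im mw; have /andP[m0 /local_repE rep] := local_period_rep i.
have [long | short] := leqP (size w) (i.-1 + local_period w i).
  by left; apply/is_periodE; split; [lia | apply: rep_at_periodic rep; lia].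
by right; apply/prefix_occurs_atE; split=> [|x xi]; [lia | apply: rep; lia].
Qed.

Lemma overhang_local_period_le i i' :
  0 < i -> i <= i' -> size w < i.-1 + local_period w i ->
  local_period w i' <= local_period w i.
Proof.
move=> i0 ii' over; have /andP[m0 /local_repE rep] := local_period_rep i.
by apply: local_period_min m0 _; apply/local_repE/(rep_atW _ _ rep); lia.
Qed.

Lemma exists_critical_point p :
  is_min_period w p -> exists2 c, 0 < c <= p & local_period w c = p.
Proof.
move=> [per_p p_min]; have /is_periodE[pw per] := per_p.
have [|q qp no_rep] := critical_factorization_eq pw per.
  move=> r /andP[r0 rp] per_r.
  have /p_min : is_period w r by apply/is_periodE; split=> //; lia.
  lia.
exists q.+1; first lia.
apply/eqP; rewrite eqn_leq local_period_le_period //= leqNgt; apply/negP => lt_p.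
have /andP[m0 /local_repE rep] := local_period_rep q.+1.
by apply: (no_rep _ _ rep); rewrite m0.
Qed.

Lemma leftmost_critical_point p :
  is_min_period w p -> exists2 c, leftmost (is_critical w p) c & c <= p.
Proof.
move=> min_p; have [[/andP[_ pw] _] _] := min_p.
have [c' /andP[c'0 c'p] c'_crit] := exists_critical_point min_p.
have ex_crit : exists i, (0 < i <= size w) && (local_period w i == p).
  by exists c'; rewrite c'_crit eqxx c'0 (leq_trans c'p pw).
case: (ex_minnP ex_crit) => c /andP[cw /eqP cp] c_min.
have c_le i : is_critical w p i -> c <= i.
  by move=> [iw ip]; apply: c_min; rewrite iw ip eqxx.
exists c; first by split.
suff : c <= c' by lia.
by apply: c_le; split=> //; rewrite c'0 (leq_trans c'p pw).
Qed.

End Positions.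

Theorem lemma4 (T : eqType) (w : seq T) (p k : nat) :
  is_min_period w p -> 1 < p ->
  is_max (fun l => exists j, 1 < j <= p /\ prefix_occurs_at w j l) k ->
  exists i,
    leftmost (fun i => is_critical w p i) i /\
    leftmost (fun i => k + 1 < i <= size w /\
                (i < local_period w i + 1 \/ size w + 1 < i + local_period w i)) i.
Proof.
move=> min_p _ [[j [/andP[j1 jp] occ_j]] k_max].
have [[/andP[_ pw] _] p_min] := min_p.
have [c c_left c_le_p] := leftmost_critical_point min_p.
have [[/andP[c0 cw] cp] c_min] := c_left.
have mu_lt_p i : i <= k.+1 -> local_period w i < p.
  by move=> ik; have := local_period_le_occurrence j1 occ_j ik; lia.
exists c; split=> //; split.
  by split; [apply/andP; split; [have := mu_lt_p c |] | left]; lia.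
move=> i [/andP[ki iw] bound].
have [ip | ip] := eqVneq (local_period w i) p; first by apply: c_min; split; [lia |].
have lt_p : local_period w i < p by have := local_period_le_period i min_p.1; lia.
case: bound => [left | right].
  have [i0 im mw] : [/\ 0 < i, i <= local_period w i & local_period w i <= size w].
    by split; lia.
  case: (local_period_left_boundary i0 im mw) => [/p_min | occ]; first lia.
  have : i.-1 <= k.
    by apply: k_max; exists (local_period w i).+1; split=> //; apply/andP; split; lia.
  lia.
rewrite leqNgt; apply/negP => ic; have i0 : 0 < i by lia.
have := overhang_local_period_le (w := w) i0 (ltnW ic); lia.
Qed.
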